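(* Consider a power network modeled as an undirected graph with $n$ buses and $m$ transmission lines, indexed by $\ell\in\{1,\dots,m\}$, where each line $\ell$ is given an orientation from a bus $i$ to a bus $j$. Let $A\in\mathbb{R}^{m\times n}$ be the branch-bus incidence matrix (row $\ell$ has entry $1$ in column $i$, entry $-1$ in column $j$, and $0$ elsewhere), and let $|A|$ denote its entrywise absolute value. For each line $\ell$ let $\check{L}_\ell:\mathbb{R}\to\mathbb{R}$ be a general loss function and $\check{F}_\ell:\mathbb{R}\to\mathbb{R}$ a general mid-line power flow function (as defined in the context), and define $L,F:\mathbb{R}^m\to\mathbb{R}^m$ by $L_\ell(\Delta\theta)=\check{L}_\ell(\Delta\theta_\ell)$ and $F_\ell(\Delta\theta)=\check{F}_\ell(\Delta\theta_\ell)$. Define $T:\mathbb{R}^m\to\mathbb{R}^n$ by $$T(\Delta\theta)=\tfrac12|A|^{\dagger}L(\Delta\theta)+A^{\dagger}F(\Delta\theta),$$ where ${}^\dagger$ denotes transpose. Let $C:\mathbb{R}^n\to\mathbb{R}$ be convex, and let $D,\underline{P},\overline{P}\in\mathbb{R}^n$ and $\underline{\Delta\theta},\overline{\Delta\theta}\in\mathbb{R}^m$ be given. For a choice of reference bus $\nu\in\{1,\dots,n\}$, let $A^{(\nu)}\in\mathbb{R}^{m\times(n-1)}$ be $A$ with column $\nu$ removed, and define the economic dispatch problem with reference bus $\nu$ as $$\min_{P\in\mathbb{R}^n,\ \vartheta\in\mathbb{R}^{n-1}} C(P)\quad\text{s.t.}\quad T(A^{(\nu)}\vartheta)=P-D,\quad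 \underline{P}\le P\le\overline{P},\quad \underline{\Delta\theta}\le A^{(\nu)}\vartheta\le\overline{\Delta\theta}.$$ Consider two instances of this problem, defined with (possibly different) reference buses $\nu_1$ and $\nu_2$, with all other data identical. If $(P^\star,\dot\theta^\star)\in\mathbb{R}^n\times\mathbb{R}^{n-1}$ is a solution (optimal point) of the first instance, then there exists $\ddot\theta^\star\in\mathbb{R}^{n-1}$ such that $(P^\star,\ddot\theta^\star)$ is a solution of the second instance.
   Context: Fix for each line $\ell$ constants $\psi_\ell\in\mathbb{R}$ (the angle of the line's off-nominal transformer turns ratio). Let $\mathcal{D}_\ell=[-\tfrac{\pi}{2}+\psi_\ell,\tfrac{\pi}{2}+\psi_\ell]$ and $\mathcal{D}_{\ell+}=[\psi_\ell,\tfrac{\pi}{2}+\psi_\ell]$. A general loss function $\check{L}_\ell:\mathbb{R}\to\mathbb{R}$ is a function that is strictly convex on $\mathcal{D}_\ell$, continuously differentiable, non-negative, symmetric about the point $\psi_\ell$, and strictly monotonically increasing on $\mathcal{D}_{\ell+}$. A general mid-line power flow function $\check{F}_\ell:\mathbb{R}\to\mathbb{R}$ is a continuously differentiable function that is strictly monotonic on $\mathcal{D}_\ell$. Inequalities between vectors are componentwise. A ''solution'' means a global minimizer of the stated optimization problem. *)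

From HB Require Import structures.
From mathcomp Require Import all_boot all_order all_algebra.
From mathcomp Require Import all_classical all_reals all_analysis.
Set Implicit Arguments. Unset Strict Implicit. Unset Printing Implicit Defensive.
Import Order.TTheory GRing.Theory Num.Theory.
Import numFieldNormedType.Exports.
Local Open Scope ring_scope.

Definition strictly_convex_on (R : realType) (S : set R) (f : R -> R) : Prop :=
  forall x y t, S x -> S y -> x != y -> 0 < t < 1 ->
    f (t * x + (1 - t) * y) < t * f x + (1 - t) * f y.

Definition C1 (R : realType) (f : R -> R) : Prop :=
  (forall x, derivable f x 1) /\ continuous (derive1 f).

Definition strictly_increasing_on (R : realType) (S : set R) (f : R -> R) : Prop :=
  forall x y, S x -> S y -> x < y -> f x < f y.

Definition strictly_decreasing_on (R : realType) (S : set R) (f : R -> R) : Prop :=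
  forall x y, S x -> S y -> x < y -> f y < f x.

Definition Dl (R : realType) (psi : R) : set R :=
  [set x | - (pi / 2) + psi <= x <= pi / 2 + psi].
Definition Dlp (R : realType) (psi : R) : set R :=
  [set x | psi <= x <= pi / 2 + psi].

Definition general_loss (R : realType) (psi : R) (f : R -> R) : Prop :=
  [/\ strictly_convex_on (Dl psi) f, C1 f, (forall x, 0 <= f x),
      (forall x, f (psi + x) = f (psi - x)) &
      strictly_increasing_on (Dlp psi) f].

Definition general_flow (R : realType) (psi : R) (f : R -> R) : Prop :=
  C1 f /\ (strictly_increasing_on (Dl psi) f \/ strictly_decreasing_on (Dl psi) f).

Definition convex_fun (R : realType) (n : nat) (C : 'cV[R]_n -> R) : Prop :=
  forall (x y : 'cV[R]_n) (t : R), 0 <= t <= 1 ->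
    C (t *: x + (1 - t) *: y) <= t * C x + (1 - t) * C y.

Definition vle (R : realType) (k : nat) (u v : 'cV[R]_k) : Prop :=
  forall i, u i 0 <= v i 0.

(* branch-bus incidence matrix: line l oriented from bus (fr l) to bus (tt l) *)
Definition incidence (R : realType) (m n : nat) (fr tt : 'I_m -> 'I_n) : 'M[R]_(m, n) :=
  \matrix_(l, k) ((k == fr l)%:R - (k == tt l)%:R).

Definition absmx (R : realType) (m n : nat) (A : 'M[R]_(m, n)) : 'M[R]_(m, n) :=
  map_mx (fun x => `|x|) A.

Definition Tmap (R : realType) (m n : nat) (fr tt : 'I_m -> 'I_n)
    (Lc Fc : 'I_m -> R -> R) (dth : 'cV[R]_m) : 'cV[R]_n :=
  let A := incidence R fr tt in
  (1 / 2) *: ((absmx A)^T *m (\col_l Lc l (dth l 0)))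
  + A^T *m (\col_l Fc l (dth l 0)).

Definition ed_feasible (R : realType) (m n : nat) (fr tt : 'I_m -> 'I_n)
    (Lc Fc : 'I_m -> R -> R) (D Plo Phi : 'cV[R]_n) (dlo dhi : 'cV[R]_m)
    (nu : 'I_n) (P : 'cV[R]_n) (th : 'cV[R]_(n.-1)) : Prop :=
  let Anu := col' nu (incidence R fr tt) in
  [/\ Tmap fr tt Lc Fc (Anu *m th) = P - D,
      vle Plo P, vle P Phi, vle dlo (Anu *m th) & vle (Anu *m th) dhi].

Definition ed_solution (R : realType) (m n : nat) (fr tt : 'I_m -> 'I_n)
    (Lc Fc : 'I_m -> R -> R) (C : 'cV[R]_n -> R) (D Plo Phi : 'cV[R]_n)
    (dlo dhi : 'cV[R]_m) (nu : 'I_n) (P : 'cV[R]_n) (th : 'cV[R]_(n.-1)) : Prop :=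
  ed_feasible fr tt Lc Fc D Plo Phi dlo dhi nu P th /\
  forall P' th', ed_feasible fr tt Lc Fc D Plo Phi dlo dhi nu P' th' -> C P <= C P'.

From HB Require Import structures.
From mathcomp Require Import all_boot all_order all_algebra.
From mathcomp Require Import all_classical all_reals all_analysis.
Set Implicit Arguments. Unset Strict Implicit. Unset Printing Implicit Defensive.
Import Order.TTheory GRing.Theory Num.Theory.
Local Open Scope ring_scope.

(* The rows of the incidence matrix sum to zero, so shifting every bus angle by
   the same constant changes no angle difference. Hence every reduced incidence
   matrix A^(nu) has the column space of the full matrix A: a vector of bus
   angles is represented with reference bus nu by subtracting its nu-th entry
   and dropping it. Since the dispatch problem depends on the angles only
   through the line angle differences A^(nu) theta, changing the reference bus
   changes neither the feasible power injections nor the optimal ones. *)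

Section ReducedMatrix.

Variables (R : pzRingType) (m n : nat) (A : 'M[R]_(m, n)).

Lemma mulmx_col'_row' (nu : 'I_n) p (B : 'M[R]_(n, p)) :
  row nu B = 0 -> col' nu A *m row' nu B = A *m B.
Proof.
move=> Bnu0; apply/matrixP => i j; rewrite !mxE (bigD1_ord nu) //=.
have -> : B nu j = 0 by move/matrixP/(_ 0 j): Bnu0; rewrite !mxE.
by rewrite mulr0 add0r; apply: eq_bigr => k _; rewrite !mxE.
Qed.

Lemma mulmx_col'_range (nu : 'I_n) p (B : 'M[R]_(n.-1, p)) :
  exists C : 'M[R]_(n, p), col' nu A *m B = A *m C.
Proof.
pose C := \matrix_(j, c) oapp (fun k => B k c) 0 (unlift nu j).
have C_nu0 : row nu C = 0 by apply/matrixP => i c; rewrite !mxE unlift_none.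
have C_lift : row' nu C = B by apply/matrixP => k c; rewrite !mxE liftK.
by exists C; rewrite -(mulmx_col'_row' C_nu0) C_lift.
Qed.

Hypothesis A_rows_sum0 : A *m (const_mx 1 : 'cV[R]_n) = 0.

Lemma mulmx_range_col' (nu : 'I_n) p (C : 'M[R]_(n, p)) :
  exists B : 'M[R]_(n.-1, p), col' nu A *m B = A *m C.
Proof.
pose C0 := C - const_mx 1 *m row nu C.
have AC0 : A *m C0 = A *m C by rewrite mulmxBr mulmxA A_rows_sum0 mul0mx subr0.
have C0_nu0 : row nu C0 = 0.
  apply/matrixP => i j; rewrite !mxE (bigD1_ord ord0) //= big_ord0 !mxE.
  by rewrite mul1r addr0 subrr.
by exists (row' nu C0); rewrite mulmx_col'_row' // AC0.
Qed.

Lemma mulmx_col'_change_ref (nu nu' : 'I_n) p (B : 'M[R]_(n.-1, p)) :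
  exists B' : 'M[R]_(n.-1, p), col' nu' A *m B' = col' nu A *m B.
Proof.
have [C ->] := mulmx_col'_range nu B.
exact: mulmx_range_col'.
Qed.

End ReducedMatrix.

Lemma incidence_rows_sum0 (R : realType) m n (fr tt : 'I_m -> 'I_n) :
  incidence R fr tt *m (const_mx 1 : 'cV[R]_n) = 0.
Proof.
have sum_indicator (a : 'I_n) : \sum_(k < n) ((k == a)%:R : R) = 1.
  by rewrite (bigD1 a) //= eqxx big1 ?addr0 // => k /negbTE ->.
apply/matrixP => l i; rewrite !mxE.
under eq_bigr do rewrite !mxE mulr1.
by rewrite sumrB !sum_indicator subrr.
Qed.

Lemma ed_feasible_change_ref (R : realType) m n (fr tt : 'I_m -> 'I_n)
    (Lc Fc : 'I_m -> R -> R) (D Plo Phi : 'cV[R]_n) (dlo dhi : 'cV[R]_m)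
    (nu1 nu2 : 'I_n) (P : 'cV[R]_n) (th1 : 'cV[R]_(n.-1)) :
  ed_feasible fr tt Lc Fc D Plo Phi dlo dhi nu1 P th1 ->
  exists th2, ed_feasible fr tt Lc Fc D Plo Phi dlo dhi nu2 P th2.
Proof.
have [th2 E] := mulmx_col'_change_ref (incidence_rows_sum0 R fr tt) nu1 nu2 th1.
by exists th2; rewrite /ed_feasible /= E.
Qed.

Theorem theorem1 (R : realType) (n m : nat) (fr tt : 'I_m -> 'I_n)
    (Hloop : forall l, fr l != tt l)
    (psi : 'I_m -> R) (Lc Fc : 'I_m -> R -> R)
    (HL : forall l, general_loss (psi l) (Lc l))
    (HF : forall l, general_flow (psi l) (Fc l))
    (C : 'cV[R]_n -> R) (HC : convex_fun C)
    (D Plo Phi : 'cV[R]_n) (dlo dhi : 'cV[R]_m)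
    (nu1 nu2 : 'I_n) (Pstar : 'cV[R]_n) (th1 : 'cV[R]_(n.-1)) :
  ed_solution fr tt Lc Fc C D Plo Phi dlo dhi nu1 Pstar th1 ->
  exists th2 : 'cV[R]_(n.-1),
    ed_solution fr tt Lc Fc C D Plo Phi dlo dhi nu2 Pstar th2.
Proof.
move=> [feas1 opt1].
have [th2 feas2] := ed_feasible_change_ref nu2 feas1.
exists th2; split=> // P th feas.
have [th' feas'] := ed_feasible_change_ref nu1 feas.
exact: opt1 feas'.
Qed.
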